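(* Let $(B,D,d,\theta)$ be a crossed module, $A$ an abelian group and $\zeta:\operatorname{Ker}d\to A$ a surjective abstract $\zeta$-kernel. If $\zeta$-extensions of co-type $B\xrightarrow{d}D$ exist, then there is a bijection $$\operatorname{Ext}_{B\to D}(D,A,\zeta)\;\leftrightarrow\;H^2(\operatorname{Coker}d,A),$$ where $\operatorname{Coker}d$ acts trivially on $A$.
   Context: A crossed module $(B,D,d,\theta)$: groups $B,D$, homomorphisms $d:B\to D$, $\theta:D\to\operatorname{Aut}B$ with $\theta_{d(b)}(b')=bb'b^{-1}$ and $d(\theta_x(b))=x\,d(b)\,x^{-1}$; $\operatorname{Coker}d=D/d(B)$. An abstract $\zeta$-kernel: a homomorphism $\zeta:\operatorname{Ker}d\to A$ ($A$ abelian) with $\zeta(\theta_x(c))=\zeta(c)$ for all $x\in D$, $c\in\operatorname{Ker}d$. A $\zeta$-extension of co-type $B\xrightarrow{d}D$: an exact sequence of groups $0\to A\xrightarrow{j}E\xrightarrow{p}D\to1$ with $j(A)\subseteq Z(E)$, together with a homomorphism $\beta:B\to E$ such that $p\beta=d$, $\beta(\theta_x b)=e\,\beta(b)\,e^{-1}$ whenever $p(e)=x$, and $j(\zeta(c))=\beta(c)$ for all $c\in\operatorname{Ker}d$. Two such extensions $(E,j,p,\beta)$ and $(E',j',p',\beta')$ are equivalent if there is a group isomorphism $\omega:E\to E'$ with $\omega j=j'$, $p'\omega=p$ and $\omega\beta=\beta'$. $\operatorname{Ext}_{B\to D}(D,A,\zeta)$ is the set of equivalence classes of $\zeta$-extensions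 of co-type $B\xrightarrow{d}D$. *)

Set Implicit Arguments.
Unset Strict Implicit.

Record group := Group {
  carrier :> Type;
  gmul : carrier -> carrier -> carrier;
  gone : carrier;
  ginv : carrier -> carrier;
  gmulA : forall x y z, gmul x (gmul y z) = gmul (gmul x y) z;
  gmul1l : forall x, gmul gone x = x;
  gmul1r : forall x, gmul x gone = x;
  gmulVl : forall x, gmul (ginv x) x = gone;
  gmulVr : forall x, gmul x (ginv x) = gone }.

Arguments gmul {g} _ _.
Arguments gone {g}.
Arguments ginv {g} _.

Definition abelian (G : group) : Prop := forall x y : G, gmul x y = gmul y x.

Definition is_hom (G H : group) (f : G -> H) : Prop :=
  forall x y : G, f (gmul x y) = gmul (f x) (f y).

Definition injective {X Y : Type} (f : X -> Y) : Prop :=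
  forall x y, f x = f y -> x = y.
Definition surjective {X Y : Type} (f : X -> Y) : Prop :=
  forall y, exists x, f x = y.
Definition bijective {X Y : Type} (f : X -> Y) : Prop :=
  injective f /\ surjective f.

Definition action_by_auts (B D : group) (theta : D -> B -> B) : Prop :=
  (forall x : D, is_hom (theta x) /\ bijective (theta x)) /\
  (forall (x y : D) (b : B), theta (gmul x y) b = theta x (theta y b)).

Definition crossed_module (B D : group) (d : B -> D) (theta : D -> B -> B) : Prop :=
  is_hom d /\ action_by_auts theta /\
  (forall b b' : B, theta (d b) b' = gmul (gmul b b') (ginv b)) /\
  (forall (x : D) (b : B), d (theta x b) = gmul (gmul x (d b)) (ginv x)).

Definition in_ker (B D : group) (d : B -> D) (c : B) : Prop := d c = gone.

(* An abstract zeta-kernel Ker d -> A.  zeta is given as a function on B,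
   only its restriction to Ker d is ever used. *)
Definition zeta_kernel (B D A : group) (d : B -> D) (theta : D -> B -> B)
    (zeta : B -> A) : Prop :=
  abelian A /\
  (forall c c', in_ker d c -> in_ker d c' -> zeta (gmul c c') = gmul (zeta c) (zeta c')) /\
  (forall (x : D) c, in_ker d c -> zeta (theta x c) = zeta c).

Definition zeta_surjective (B D A : group) (d : B -> D) (zeta : B -> A) : Prop :=
  forall a : A, exists c, in_ker d c /\ zeta c = a.

Definition is_cokernel (B D Q : group) (d : B -> D) (pi : D -> Q) : Prop :=
  is_hom pi /\ surjective pi /\
  (forall x : D, pi x = gone <-> exists b : B, d b = x).

Record zext (B D A : group) (d : B -> D) (theta : D -> B -> B) (zeta : B -> A) :=
  ZExt {
  ext_E : group;
  ext_j : A -> ext_E;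
  ext_p : ext_E -> D;
  ext_beta : B -> ext_E;
  ext_j_hom : is_hom ext_j;
  ext_p_hom : is_hom ext_p;
  ext_beta_hom : is_hom ext_beta;
  ext_j_inj : injective ext_j;
  ext_p_surj : surjective ext_p;
  ext_exact : forall e : ext_E, ext_p e = gone <-> exists a : A, ext_j a = e;
  ext_central : forall (a : A) (e : ext_E), gmul (ext_j a) e = gmul e (ext_j a);
  ext_pbeta : forall b : B, ext_p (ext_beta b) = d b;
  ext_beta_equiv : forall (b : B) (e : ext_E),
      ext_beta (theta (ext_p e) b) = gmul (gmul e (ext_beta b)) (ginv e);
  ext_zeta : forall c : B, in_ker d c -> ext_j (zeta c) = ext_beta c }.

Arguments ext_E {B D A d theta zeta} _.
Arguments ext_j {B D A d theta zeta} _ _.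
Arguments ext_p {B D A d theta zeta} _ _.
Arguments ext_beta {B D A d theta zeta} _ _.

Definition zext_equiv (B D A : group) (d : B -> D) (theta : D -> B -> B) (zeta : B -> A)
    (X Y : zext d theta zeta) : Prop :=
  exists omega : ext_E X -> ext_E Y,
    is_hom omega /\ bijective omega /\
    (forall a, omega (ext_j X a) = ext_j Y a) /\
    (forall e, ext_p Y (omega e) = ext_p X e) /\
    (forall b, omega (ext_beta X b) = ext_beta Y b).

(* Inhomogeneous 2-cochains / cocycles / coboundaries of Q with coefficients in
   A with trivial Q-action (A abelian, written multiplicatively). *)
Definition cocycle2 (Q A : group) (f : Q -> Q -> A) : Prop :=
  forall x y z : Q,
    gmul (f y z) (f x (gmul y z)) = gmul (f (gmul x y) z) (f x y).

Definition coboundary1 (Q A : group) (h : Q -> A) (x y : Q) : A :=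
  gmul (gmul (h y) (ginv (h (gmul x y)))) (h x).

Definition cohomologous (Q A : group) (f g : Q -> Q -> A) : Prop :=
  exists h : Q -> A, forall x y : Q, f x y = gmul (g x y) (coboundary1 h x y).

(* Fix a set-theoretic section s of D -> Q = Coker d.  Since zeta is onto, in every
   zeta-extension Ker p = j(A) = beta(Ker d), so p^-1(d(B)) = beta(B), and beta(b) = 1
   exactly when b lies in Ker d and zeta(b) = 1 -- a condition independent of the
   extension.  Choose lifts e0(q) of s(q) in one extension E0 and b(x,y) in B with
   e0(x)e0(y) = beta(b(x,y)) e0(xy).  In any extension E, lifts e(q) of s(q) then satisfy
   e(x)e(y) = beta(b(x,y)) j(f(x,y)) e(xy) for a unique f : Q x Q -> A.  Expanding
   e(x)e(y)e(z) in two ways and comparing with E0 shows that f is a 2-cocycle; changing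
   the lifts changes f by a coboundary; extensions sharing f are isomorphic through
   beta(b) e(q) |-> beta(b) e'(q); and twisting the multiplication of E0 by a normalized
   cocycle realizes every cohomology class. *)

From Stdlib Require Import ClassicalEpsilon.

Section GroupLemmas.
Context {G : group}.
Implicit Types x y z : G.

Lemma gmulK x y : gmul (gmul y x) (ginv x) = y.
Proof. rewrite <- gmulA, gmulVr, gmul1r; reflexivity. Qed.

Lemma gmulKV x y : gmul (gmul y (ginv x)) x = y.
Proof. rewrite <- gmulA, gmulVl, gmul1r; reflexivity. Qed.

Lemma gmulKg x y : gmul (ginv x) (gmul x y) = y.
Proof. rewrite gmulA, gmulVl, gmul1l; reflexivity. Qed.

Lemma gmulI x y z : gmul x y = gmul x z -> y = z.
Proof. intro H. rewrite <- (gmulKg x y), H, gmulKg; reflexivity. Qed.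

Lemma gmulIg x y z : gmul y x = gmul z x -> y = z.
Proof. intro H. rewrite <- (gmulK x y), H, gmulK; reflexivity. Qed.

Lemma ginv_unique x y : gmul x y = gone -> y = ginv x.
Proof. intro H. apply (gmulI x). rewrite H, gmulVr; reflexivity. Qed.

Lemma ginvK x : ginv (ginv x) = x.
Proof. symmetry; apply ginv_unique, gmulVl. Qed.

Lemma ginv1 : ginv (@gone G) = gone.
Proof. symmetry; apply ginv_unique, gmul1l. Qed.

Lemma ginvM x y : ginv (gmul x y) = gmul (ginv y) (ginv x).
Proof. symmetry; apply ginv_unique. rewrite gmulA, gmulK, gmulVr; reflexivity. Qed.

Lemma eq_mulgV1 x y : gmul x (ginv y) = gone -> x = y.
Proof. intro H. rewrite <- (gmulKV y x), H, gmul1l; reflexivity. Qed.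

End GroupLemmas.

Arguments gmulI {G} [x y z] _.
Arguments gmulIg {G} [x y z] _.
Arguments ginv_unique {G} [x y] _.
Arguments eq_mulgV1 {G} [x y] _.

Ltac gsimpl := repeat rewrite ?gmulA, ?gmul1l, ?gmul1r, ?gmulVr, ?gmulVl, ?gmulK, ?gmulKV,
  ?ginvM, ?ginvK, ?ginv1.

Section Homomorphisms.
Context {G H : group} (f : G -> H).
Hypothesis f_hom : is_hom f.

Lemma hom1 : f gone = gone.
Proof. apply (gmulI (x := f gone)). rewrite <- f_hom, !gmul1r; reflexivity. Qed.

Lemma homV x : f (ginv x) = ginv (f x).
Proof. apply ginv_unique. rewrite <- f_hom, gmulVr; apply hom1. Qed.

End Homomorphisms.

Arguments hom1 {G H f} _.
Arguments homV {G H f} _ _.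

Section Cochains.
Context {Q A : group}.
Hypothesis A_abelian : abelian A.
Implicit Types (x y z : Q) (g : Q -> Q -> A) (h : Q -> A).

Lemma abelian_mulACA (a b c e : A) :
  gmul (gmul a b) (gmul c e) = gmul (gmul a c) (gmul b e).
Proof. rewrite !gmulA. f_equal. rewrite <- !gmulA. f_equal. apply A_abelian. Qed.

Lemma coboundary1_mulh h x y :
  gmul (coboundary1 h x y) (h (gmul x y)) = gmul (h x) (h y).
Proof.
  unfold coboundary1. rewrite (A_abelian (gmul (h y) _) (h x)). gsimpl. reflexivity.
Qed.

Lemma coboundary1_mulc h k x y :
  coboundary1 (fun q => gmul (h q) k) x y = gmul (coboundary1 h x y) k.
Proof.
  unfold coboundary1.
  rewrite ginvM, (A_abelian (ginv k)), (abelian_mulACA (h y) k), gmulVr, gmul1r, gmulA.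
  reflexivity.
Qed.

Lemma cocycle2_1l g y : cocycle2 g -> g gone y = g gone gone.
Proof. intro Hg. assert (H := Hg gone gone y). rewrite !gmul1l in H. exact (gmulI H). Qed.

Lemma cocycle2_1r g x : cocycle2 g -> g x gone = g gone gone.
Proof.
  intro Hg. assert (H := Hg x gone gone). rewrite !gmul1r, (A_abelian (g gone gone)) in H.
  symmetry; exact (gmulI H).
Qed.

Lemma cocycle2_mulc g k : cocycle2 g -> cocycle2 (fun x y => gmul (g x y) k).
Proof.
  intros Hg x y z. rewrite (abelian_mulACA (g y z)), (abelian_mulACA (g (gmul x y) z)), Hg.
  reflexivity.
Qed.

End Cochains.

Section Extensions.
Context {B D A : group} (d : B -> D) (theta : D -> B -> B) (zeta : B -> A).
Hypothesis A_abelian : abelian A.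
Hypothesis zeta_surj : zeta_surjective d zeta.
Notation Z := (zext d theta zeta).

Section OneExtension.
Variable X : Z.
Notation j := (ext_j X).
Notation p := (ext_p X).
Notation beta := (ext_beta X).

Lemma ext_jM a a' : j (gmul a a') = gmul (j a) (j a').
Proof. apply ext_j_hom. Qed.
Lemma ext_pM e e' : p (gmul e e') = gmul (p e) (p e').
Proof. apply ext_p_hom. Qed.
Lemma ext_betaM b b' : beta (gmul b b') = gmul (beta b) (beta b').
Proof. apply ext_beta_hom. Qed.
Lemma ext_j1 : j gone = gone.
Proof. apply hom1, ext_j_hom. Qed.
Lemma ext_pV e : p (ginv e) = ginv (p e).
Proof. apply homV, ext_p_hom. Qed.
Lemma ext_betaV b : beta (ginv b) = ginv (beta b).
Proof. apply homV, ext_beta_hom. Qed.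
Lemma ext_p_j a : p (j a) = gone.
Proof. apply (proj2 (ext_exact _)). exists a; reflexivity. Qed.
Lemma ext_jC a e : gmul e (j a) = gmul (j a) e.
Proof. symmetry; apply ext_central. Qed.

Lemma ext_beta_conj e b : gmul e (beta b) = gmul (beta (theta (p e) b)) e.
Proof. rewrite ext_beta_equiv, gmulKV. reflexivity. Qed.

Lemma ext_j_beta a : exists c, in_ker d c /\ zeta c = a /\ j a = beta c.
Proof.
  destruct (zeta_surj a) as [c [Hc <-]]. exists c.
  split; [exact Hc | split; [reflexivity | apply ext_zeta; exact Hc]].
Qed.

Lemma ext_ker_p e : p e = gone -> exists c, e = beta c.
Proof.
  intro H. destruct (proj1 (ext_exact e) H) as [a <-].
  destruct (ext_j_beta a) as [c [_ [_ Hc]]]. exists c; exact Hc.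
Qed.

Lemma ext_beta_eq1 b : beta b = gone <-> in_ker d b /\ zeta b = gone.
Proof.
  split.
  - intro H1.
    assert (Hk : in_ker d b).
    { unfold in_ker. rewrite <- (ext_pbeta X b), H1. apply hom1, ext_p_hom. }
    split; [exact Hk |]. apply (ext_j_inj (z := X)).
    rewrite ext_zeta, H1, ext_j1 by exact Hk. reflexivity.
  - intros [Hk Hz]. rewrite <- ext_zeta, Hz by exact Hk. apply ext_j1.
Qed.

End OneExtension.

Lemma ext_beta_eq_transfer (X Y : Z) b1 b2 :
  ext_beta X b1 = ext_beta X b2 -> ext_beta Y b1 = ext_beta Y b2.
Proof.
  intro H. apply eq_mulgV1. rewrite <- ext_betaV, <- ext_betaM.
  apply ext_beta_eq1, (ext_beta_eq1 X). rewrite ext_betaM, ext_betaV, H. apply gmulVr.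
Qed.

Section Cokernel.
Context {Q : group} (pi : D -> Q).
Hypothesis pi_coker : is_cokernel d pi.
Variable s : Q -> D.
Hypothesis s_section : forall q, pi (s q) = q.

Lemma pi_hom : is_hom pi.
Proof. exact (proj1 pi_coker). Qed.

Lemma pi_d b : pi (d b) = gone.
Proof. apply (proj2 (proj2 pi_coker)). exists b; reflexivity. Qed.

Lemma ext_pi_beta_lift (X : Z) e b q :
  ext_p X e = s q -> pi (ext_p X (gmul (ext_beta X b) e)) = q.
Proof. intro He. rewrite ext_pM, ext_pbeta, He, pi_hom, pi_d, s_section. apply gmul1l. Qed.

Lemma ext_decomp (X : Z) (e0 : Q -> ext_E X) (He0 : forall q, ext_p X (e0 q) = s q) e :
  exists b, e = gmul (ext_beta X b) (e0 (pi (ext_p X e))).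
Proof.
  set (q := pi (ext_p X e)).
  assert (Hq : pi (gmul (ext_p X e) (ginv (s q))) = gone).
  { rewrite pi_hom, (homV pi_hom), s_section. apply gmulVr. }
  destruct (proj1 (proj2 (proj2 pi_coker) _) Hq) as [b' Hb'].
  destruct (ext_ker_p X (gmul (gmul (ginv (ext_beta X b')) e) (ginv (e0 q)))) as [c Hc].
  { rewrite !ext_pM, !ext_pV, ext_pbeta, Hb', He0. gsimpl. reflexivity. }
  exists (gmul b' c). rewrite ext_betaM, <- Hc. gsimpl. reflexivity.
Qed.

Lemma exists_base_lift (X0 : Z) :
  exists (bb : Q -> Q -> B) (e0 : Q -> ext_E X0),
    (forall x y, d (bb x y) = gmul (gmul (s x) (s y)) (ginv (s (gmul x y)))) /\
    (forall q, ext_p X0 (e0 q) = s q) /\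
    (forall x y, gmul (e0 x) (e0 y) = gmul (ext_beta X0 (bb x y)) (e0 (gmul x y))).
Proof.
  destruct (choice (fun q e => ext_p X0 e = s q) (fun q => ext_p_surj X0 (s q)))
    as [e0 He0].
  assert (Hb : forall x, exists bx : Q -> B, forall y,
    gmul (e0 x) (e0 y) = gmul (ext_beta X0 (bx y)) (e0 (gmul x y))).
  { intro x.
    apply (choice (fun y b => gmul (e0 x) (e0 y) = gmul (ext_beta X0 b) (e0 (gmul x y)))).
    intro y.
    destruct (ext_decomp X0 e0 He0 (gmul (e0 x) (e0 y))) as [b Hb].
    exists b. rewrite Hb at 1. do 2 f_equal.
    rewrite ext_pM, !He0, pi_hom, !s_section. reflexivity. }
  destruct (choice _ Hb) as [bb Hbb].
  exists bb, e0. split; [| split; [exact He0 | exact Hbb]].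
  intros x y. rewrite <- (ext_pbeta X0), <- (gmulK (e0 (gmul x y)) (ext_beta X0 _)), <- Hbb.
  rewrite !ext_pM, ext_pV, !He0. reflexivity.
Qed.

Section FactorSets.
Variable bb : Q -> Q -> B.
Hypothesis bb_d : forall x y, d (bb x y) = gmul (gmul (s x) (s y)) (ginv (s (gmul x y))).

(* The B-valued part bb of the factor set is shared by all extensions; only its
   A-valued part f depends on the extension. *)
Definition is_factor_set (X : Z) (e : Q -> ext_E X) (f : Q -> Q -> A) : Prop :=
  (forall q, ext_p X (e q) = s q) /\
  forall x y, gmul (e x) (e y) =
    gmul (gmul (ext_beta X (bb x y)) (ext_j X (f x y))) (e (gmul x y)).

Lemma factor_set_unique X e f f' :
  is_factor_set X e f -> is_factor_set X e f' -> forall x y, f x y = f' x y.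
Proof.
  intros [_ Hf] [_ Hf'] x y. apply (ext_j_inj (z := X)).
  apply (gmulI (x := ext_beta X (bb x y))), (gmulIg (x := e (gmul x y))).
  rewrite <- Hf, <- Hf'. reflexivity.
Qed.

Lemma factor_set_exists X e :
  (forall q, ext_p X (e q) = s q) -> exists f, is_factor_set X e f.
Proof.
  intro He.
  assert (Hf : forall x, exists fx : Q -> A, forall y, gmul (e x) (e y) =
    gmul (gmul (ext_beta X (bb x y)) (ext_j X (fx y))) (e (gmul x y))).
  { intro x.
    apply (choice (fun y a => gmul (e x) (e y) =
      gmul (gmul (ext_beta X (bb x y)) (ext_j X a)) (e (gmul x y)))).
    intro y.
    assert (Hp : ext_p X (gmul (gmul (gmul (ginv (ext_beta X (bb x y))) (e x)) (e y))
                          (ginv (e (gmul x y)))) = gone).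
    { rewrite !ext_pM, !ext_pV, ext_pbeta, !He, bb_d. gsimpl. reflexivity. }
    destruct (proj1 (ext_exact _) Hp) as [a Ha]. exists a. rewrite Ha. gsimpl. reflexivity. }
  destruct (choice _ Hf) as [f Hf']. exists f. split; [exact He | exact Hf'].
Qed.

Lemma factor_set_shift X e f (h : Q -> A) e' f' :
  is_factor_set X e f ->
  (forall q, e' q = gmul (ext_j X (h q)) (e q)) ->
  (forall x y, f' x y = gmul (f x y) (coboundary1 h x y)) ->
  is_factor_set X e' f'.
Proof.
  intros [He Hm] He' Hf'. split.
  - intro q. rewrite He', ext_pM, ext_p_j, He. apply gmul1l.
  - intros x y. rewrite !He', Hf'.
    rewrite <- (gmulA (ext_j X (h x))), (gmulA (e x)), (ext_jC X (h y) (e x)).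
    rewrite <- (gmulA (ext_j X (h y))), Hm, (gmulA (ext_j X (h x))), <- ext_jM.
    rewrite gmulA, (gmulA _ (ext_j X (h (gmul x y)))). f_equal.
    rewrite (gmulA _ (ext_beta X _)), <- (ext_jC X _ (ext_beta X _)), <- !gmulA, <- !ext_jM.
    do 2 f_equal. rewrite <- (gmulA (f x y)), coboundary1_mulh by exact A_abelian.
    apply A_abelian.
Qed.

Lemma factor_sets_cohomologous X e f e' f' :
  is_factor_set X e f -> is_factor_set X e' f' -> cohomologous f' f.
Proof.
  intros Hf Hf'.
  assert (Hk : forall q, exists a, ext_j X a = gmul (e' q) (ginv (e q))).
  { intro q. apply (ext_exact (z := X)).
    rewrite ext_pM, ext_pV, (proj1 Hf), (proj1 Hf'). apply gmulVr. }
  destruct (choice _ Hk) as [h Hh]. exists h. apply (factor_set_unique X e'); [exact Hf' |].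
  apply (factor_set_shift X e f h); [exact Hf | | reflexivity].
  intro q. rewrite Hh. gsimpl. reflexivity.
Qed.

Lemma factor_set_transport (X Y : Z) (omega : ext_E X -> ext_E Y) e f :
  is_hom omega ->
  (forall a, omega (ext_j X a) = ext_j Y a) ->
  (forall e, ext_p Y (omega e) = ext_p X e) ->
  (forall b, omega (ext_beta X b) = ext_beta Y b) ->
  is_factor_set X e f -> is_factor_set Y (fun q => omega (e q)) f.
Proof.
  intros Hh Hj Hp Hb [He Hm]. split.
  - intro q. rewrite Hp; apply He.
  - intros x y. rewrite <- Hh, Hm, !Hh, Hj, Hb. reflexivity.
Qed.

Lemma equiv_factor_sets_cohomologous (X Y : Z) eX eY f f' :
  zext_equiv X Y -> is_factor_set X eX f -> is_factor_set Y eY f' -> cohomologous f f'.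
Proof.
  intros [omega [Hh [_ [Hj [Hp Hb]]]]] HX HY.
  apply (factor_sets_cohomologous Y eY f' (fun q => omega (eX q))); [exact HY |].
  exact (factor_set_transport X Y omega eX f Hh Hj Hp Hb HX).
Qed.

Lemma factor_set_mul X e f b1 b2 x y c :
  is_factor_set X e f -> in_ker d c -> zeta c = f x y ->
  gmul (gmul (ext_beta X b1) (e x)) (gmul (ext_beta X b2) (e y)) =
  gmul (ext_beta X (gmul (gmul (gmul b1 (theta (s x) b2)) (bb x y)) c)) (e (gmul x y)).
Proof.
  intros [He Hm] Hc Hz.
  rewrite <- (gmulA (ext_beta X b1)), (gmulA (e x)), ext_beta_conj, He.
  rewrite <- (gmulA _ (e x) (e y)), Hm, <- Hz, ext_zeta by exact Hc.
  rewrite !ext_betaM. gsimpl. reflexivity.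
Qed.

Lemma factor_set_lift1 X e f c :
  is_factor_set X e f -> in_ker d c -> zeta c = f gone gone ->
  e gone = ext_beta X (gmul (bb gone gone) c).
Proof.
  intros [_ Hm] Hc Hz. assert (H := Hm gone gone). rewrite gmul1l in H.
  rewrite (gmulIg H), ext_betaM, <- Hz, ext_zeta by exact Hc. reflexivity.
Qed.

Section Isomorphism.
Variables (X Y : Z) (eX : Q -> ext_E X) (eY : Q -> ext_E Y) (f : Q -> Q -> A).
Hypotheses (HX : is_factor_set X eX f) (HY : is_factor_set Y eY f).

(* Every element of E_X is uniquely [beta b * eX q] up to Ker beta, which is the
   same for all extensions; the isomorphism keeps the coordinates (b, q). *)
Definition iso_coord (e : ext_E X) : B :=
  proj1_sig (constructive_indefinite_description _ (ext_decomp X eX (proj1 HX) e)).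

Definition iso_map (e : ext_E X) : ext_E Y :=
  gmul (ext_beta Y (iso_coord e)) (eY (pi (ext_p X e))).

Lemma iso_coordE e : e = gmul (ext_beta X (iso_coord e)) (eX (pi (ext_p X e))).
Proof. unfold iso_coord. destruct (constructive_indefinite_description _ _); assumption. Qed.

Lemma iso_mapE b q : iso_map (gmul (ext_beta X b) (eX q)) = gmul (ext_beta Y b) (eY q).
Proof.
  set (e := gmul (ext_beta X b) (eX q)).
  assert (Hq : pi (ext_p X e) = q) by exact (ext_pi_beta_lift X _ b q (proj1 HX q)).
  assert (He := iso_coordE e). rewrite Hq in He.
  unfold iso_map. rewrite Hq. f_equal. apply (ext_beta_eq_transfer X).
  apply (gmulIg (x := eX q)). rewrite <- He. reflexivity.
Qed.

Lemma iso_decomp e : exists b q, e = gmul (ext_beta X b) (eX q).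
Proof. exists (iso_coord e), (pi (ext_p X e)). apply iso_coordE. Qed.

Lemma iso_map_hom : is_hom iso_map.
Proof.
  intros e e'.
  destruct (iso_decomp e) as [b [x ->]]. destruct (iso_decomp e') as [b' [y ->]].
  destruct (ext_j_beta X (f x y)) as [c [Hc [Hz _]]].
  rewrite (factor_set_mul X eX f _ _ x y c HX Hc Hz), !iso_mapE.
  rewrite (factor_set_mul Y eY f _ _ x y c HY Hc Hz). reflexivity.
Qed.

Lemma iso_map_inj : injective iso_map.
Proof.
  intros e e'.
  destruct (iso_decomp e) as [b [x ->]]. destruct (iso_decomp e') as [b' [y ->]].
  rewrite !iso_mapE. intro H.
  assert (Hxy : x = y).
  { rewrite <- (ext_pi_beta_lift Y (eY x) b x (proj1 HY x)), H.
    exact (ext_pi_beta_lift Y (eY y) b' y (proj1 HY y)). }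
  subst y. apply gmulIg in H. rewrite (ext_beta_eq_transfer Y X b b' H). reflexivity.
Qed.

Lemma iso_map_surj : surjective iso_map.
Proof.
  intro e'. destruct (ext_decomp Y eY (proj1 HY) e') as [b Hb].
  exists (gmul (ext_beta X b) (eX (pi (ext_p Y e')))). rewrite iso_mapE. symmetry; exact Hb.
Qed.

Lemma iso_map_p e : ext_p Y (iso_map e) = ext_p X e.
Proof.
  destruct (iso_decomp e) as [b [q ->]].
  rewrite iso_mapE, !ext_pM, !ext_pbeta, (proj1 HX), (proj1 HY). reflexivity.
Qed.

Lemma iso_map_beta b : iso_map (ext_beta X b) = ext_beta Y b.
Proof.
  destruct (ext_j_beta X (f gone gone)) as [c [Hc [Hz _]]].
  set (u := gmul (bb gone gone) c).
  assert (HuX : ext_beta X b = gmul (ext_beta X (gmul b (ginv u))) (eX gone)).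
  { rewrite (factor_set_lift1 X eX f c HX Hc Hz), <- ext_betaM, gmulKV. reflexivity. }
  rewrite HuX, iso_mapE, (factor_set_lift1 Y eY f c HY Hc Hz), <- ext_betaM, gmulKV.
  reflexivity.
Qed.

Lemma iso_map_j a : iso_map (ext_j X a) = ext_j Y a.
Proof.
  destruct (ext_j_beta X a) as [c [Hc [<- ->]]].
  rewrite iso_map_beta, ext_zeta by exact Hc. reflexivity.
Qed.

End Isomorphism.

Lemma factor_set_equiv X Y eX eY f :
  is_factor_set X eX f -> is_factor_set Y eY f -> zext_equiv X Y.
Proof.
  intros HX HY. exists (iso_map X Y eX eY f HX).
  split; [exact (iso_map_hom _ _ _ _ _ HX HY) |].
  split; [split; [exact (iso_map_inj _ _ _ _ _ HX HY) | exact (iso_map_surj _ _ _ _ _ HX HY)] |].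
  split; [exact (iso_map_j _ _ _ _ _ HX HY) |].
  split; [exact (iso_map_p _ _ _ _ _ HX HY) | exact (iso_map_beta _ _ _ _ _ HX HY)].
Qed.

Lemma factor_set_assoc X e f x y z :
  is_factor_set X e f ->
  gmul (ext_beta X (gmul (bb x y) (bb (gmul x y) z)))
       (ext_j X (gmul (f x y) (f (gmul x y) z))) =
  gmul (ext_beta X (gmul (theta (s x) (bb y z)) (bb x (gmul y z))))
       (ext_j X (gmul (f y z) (f x (gmul y z)))).
Proof.
  intros [He Hm].
  apply (gmulIg (x := e (gmul (gmul x y) z))).
  transitivity (gmul (gmul (e x) (e y)) (e z)).
  - rewrite (Hm x y), <- (gmulA _ (e (gmul x y))), (Hm (gmul x y) z).
    rewrite !ext_betaM, !ext_jM. gsimpl.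
    rewrite <- (gmulA (ext_beta X (bb x y)) (ext_j X (f x y)) (ext_beta X _)).
    rewrite <- (ext_jC X (f x y)). gsimpl. reflexivity.
  - rewrite <- gmulA, (Hm y z), !gmulA, ext_beta_conj, He.
    rewrite <- (gmulA (ext_beta X _) (e x) (ext_j X _)), (ext_jC X (f y z) (e x)).
    rewrite (gmulA (ext_beta X _) (ext_j X _) (e x)), <- (gmulA _ (e x)), Hm.
    rewrite !ext_betaM, !ext_jM. gsimpl.
    rewrite <- (gmulA (ext_beta X (theta (s x) (bb y z))) (ext_j X (f y z))).
    rewrite <- (ext_jC X (f y z)). gsimpl. reflexivity.
Qed.

(* Associativity in an extension with trivial factor set identifies the two
   B-parts modulo Ker beta, which does not depend on the extension. *)
Lemma factor_set_cocycle X0 e0 X e f :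
  is_factor_set X0 e0 (fun _ _ => gone) -> is_factor_set X e f -> cocycle2 f.
Proof.
  intros H0 H x y z.
  assert (A0 := factor_set_assoc X0 _ _ x y z H0). cbv beta in A0.
  rewrite !gmul1l, ext_j1, !gmul1r in A0.
  assert (A1 := factor_set_assoc X e f x y z H).
  rewrite (ext_beta_eq_transfer X0 X _ _ A0) in A1.
  apply gmulI, (ext_j_inj (z := X)) in A1.
  rewrite (A_abelian (f (gmul x y) z)). symmetry; exact A1.
Qed.

Section Twist.
Variables (X0 : Z) (g : Q -> Q -> A).
Hypotheses (g_cocycle : cocycle2 g) (g1l : forall y, g gone y = gone)
  (g1r : forall x, g x gone = gone).
Notation E := (ext_E X0).
Notation j := (ext_j X0).
Notation p := (ext_p X0).
Notation beta := (ext_beta X0).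

Definition ext_pi (e : E) : Q := pi (p e).

Lemma ext_piM e e' : ext_pi (gmul e e') = gmul (ext_pi e) (ext_pi e').
Proof. unfold ext_pi. rewrite ext_pM, pi_hom. reflexivity. Qed.
Lemma ext_piV e : ext_pi (ginv e) = ginv (ext_pi e).
Proof. unfold ext_pi. rewrite ext_pV, (homV pi_hom). reflexivity. Qed.
Lemma ext_pi_j a : ext_pi (j a) = gone.
Proof. unfold ext_pi. rewrite ext_p_j. apply (hom1 pi_hom). Qed.
Lemma ext_pi_beta b : ext_pi (beta b) = gone.
Proof. unfold ext_pi. rewrite ext_pbeta. apply pi_d. Qed.
Lemma ext_pi1 : ext_pi gone = gone.
Proof. rewrite <- (ext_j1 X0). apply ext_pi_j. Qed.

Definition twist_mul (e e' : E) : E := gmul (gmul e e') (j (g (ext_pi e) (ext_pi e'))).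
Definition twist_inv (e : E) : E :=
  gmul (ginv e) (ginv (j (g (ext_pi e) (ginv (ext_pi e))))).

Lemma ext_pi_twist_inv e : ext_pi (twist_inv e) = ginv (ext_pi e).
Proof. unfold twist_inv. rewrite ext_piM, !ext_piV, ext_pi_j, ginv1, gmul1r. reflexivity. Qed.

Lemma cocycle2_Vg x : g (ginv x) x = g x (ginv x).
Proof.
  assert (H := g_cocycle x (ginv x) x).
  rewrite gmulVl, gmulVr, g1l, g1r, gmul1r, gmul1l in H. exact H.
Qed.

Lemma twist_mulA e e' e'' : twist_mul e (twist_mul e' e'') = twist_mul (twist_mul e e') e''.
Proof.
  unfold twist_mul. rewrite !ext_piM, !ext_pi_j, !gmul1r.
  rewrite <- (gmulA (gmul e e') (j _) e''), <- (ext_jC X0 _ e'').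
  gsimpl. rewrite <- !(gmulA _ (j _) (j _)), <- !ext_jM. do 2 f_equal.
  rewrite (A_abelian (g (ext_pi e) _)), g_cocycle. reflexivity.
Qed.
Lemma twist_mul1l e : twist_mul gone e = e.
Proof. unfold twist_mul. rewrite ext_pi1, g1l, ext_j1, !gmul1l, gmul1r. reflexivity. Qed.
Lemma twist_mul1r e : twist_mul e gone = e.
Proof. unfold twist_mul. rewrite ext_pi1, g1r, ext_j1, !gmul1r. reflexivity. Qed.
Lemma twist_mulVl e : twist_mul (twist_inv e) e = gone.
Proof.
  unfold twist_mul. rewrite ext_pi_twist_inv, cocycle2_Vg. unfold twist_inv.
  rewrite <- (homV (ext_j_hom X0)), <- (gmulA (ginv e) (j _) e), <- (ext_jC X0 _ e).
  gsimpl. rewrite <- ext_jM, gmulVl, ext_j1. reflexivity.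
Qed.
Lemma twist_mulVr e : twist_mul e (twist_inv e) = gone.
Proof. unfold twist_mul. rewrite ext_pi_twist_inv. unfold twist_inv. gsimpl. reflexivity. Qed.

Definition twist_group : group :=
  Group twist_mulA twist_mul1l twist_mul1r twist_mulVl twist_mulVr.

Lemma twist_j_hom : is_hom (G := A) (H := twist_group) j.
Proof.
  intros a a'. change (j (gmul a a') = twist_mul (j a) (j a')).
  unfold twist_mul. rewrite !ext_pi_j, g1l, ext_j1, gmul1r. apply ext_jM.
Qed.
Lemma twist_p_hom : is_hom (G := twist_group) (H := D) p.
Proof.
  intros e e'. change (p (twist_mul e e') = gmul (p e) (p e')).
  unfold twist_mul. rewrite ext_pM, ext_p_j, gmul1r. apply ext_pM.
Qed.
Lemma twist_beta_hom : is_hom (G := B) (H := twist_group) beta.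
Proof.
  intros b b'. change (beta (gmul b b') = twist_mul (beta b) (beta b')).
  unfold twist_mul. rewrite !ext_pi_beta, g1l, ext_j1, gmul1r. apply ext_betaM.
Qed.
Lemma twist_central (a : A) (e : twist_group) :
  @gmul twist_group (j a) e = @gmul twist_group e (j a).
Proof.
  change (twist_mul (j a) e = twist_mul e (j a)).
  unfold twist_mul. rewrite ext_pi_j, g1l, g1r, ext_j1, !gmul1r. apply ext_central.
Qed.
Lemma twist_beta_equiv (b : B) (e : twist_group) :
  beta (theta (p e) b) = @gmul twist_group (@gmul twist_group e (beta b)) (@ginv twist_group e).
Proof.
  change (beta (theta (p e) b) = twist_mul (twist_mul e (beta b)) (twist_inv e)).
  unfold twist_mul, twist_inv.
  rewrite !ext_piM, ext_pi_beta, gmul1r, g1r, ext_j1, gmul1r.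
  rewrite !ext_piV, ext_pi_j, ext_pi1, ginv1, !gmul1r.
  gsimpl. apply ext_beta_equiv.
Qed.

Definition twist_zext : Z :=
  @ZExt B D A d theta zeta twist_group j p beta twist_j_hom twist_p_hom twist_beta_hom
    (ext_j_inj (z := X0)) (ext_p_surj X0) (ext_exact (z := X0)) twist_central
    (ext_pbeta X0) twist_beta_equiv (ext_zeta X0).

Lemma twist_factor_set e0 :
  is_factor_set X0 e0 (fun _ _ => gone) -> is_factor_set twist_zext e0 g.
Proof.
  intros [He Hm]. split; [exact He |]. intros x y.
  change (twist_mul (e0 x) (e0 y) =
          twist_mul (twist_mul (beta (bb x y)) (j (g x y))) (e0 (gmul x y))).
  assert (Hq : forall q, ext_pi (e0 q) = q).
  { intro q. unfold ext_pi. rewrite He. apply s_section. }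
  unfold twist_mul. rewrite !Hq, Hm, ext_pi_beta, ext_pi_j, g1l, ext_j1, !gmul1r.
  rewrite !ext_piM, ext_pi_beta, ext_pi_j, !gmul1l, g1l, ext_j1, gmul1r.
  rewrite <- gmulA, (ext_jC X0 (g x y) (e0 _)), gmulA. reflexivity.
Qed.

End Twist.

Definition zext_lift (X : Z) (q : Q) : ext_E X :=
  proj1_sig (constructive_indefinite_description _ (ext_p_surj X (s q))).

Lemma zext_lift_p X q : ext_p X (zext_lift X q) = s q.
Proof. unfold zext_lift. destruct (constructive_indefinite_description _ _); assumption. Qed.

Definition zext_cocycle (X : Z) : Q -> Q -> A :=
  proj1_sig (constructive_indefinite_description _
    (factor_set_exists X (zext_lift X) (zext_lift_p X))).

Lemma zext_cocycle_factor_set X : is_factor_set X (zext_lift X) (zext_cocycle X).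
Proof. unfold zext_cocycle. destruct (constructive_indefinite_description _ _); assumption. Qed.

Lemma zext_equiv_cohomologous X Y :
  zext_equiv X Y <-> cohomologous (zext_cocycle X) (zext_cocycle Y).
Proof.
  split.
  - intro HXY. exact (equiv_factor_sets_cohomologous X Y _ _ _ _ HXY
                        (zext_cocycle_factor_set X) (zext_cocycle_factor_set Y)).
  - intros [h Hh]. apply (factor_set_equiv X Y (zext_lift X)
                           (fun q => gmul (ext_j Y (h q)) (zext_lift Y q)) (zext_cocycle X)).
    + apply zext_cocycle_factor_set.
    + exact (factor_set_shift Y _ _ h _ _ (zext_cocycle_factor_set Y) (fun _ => eq_refl) Hh).
Qed.

Section BaseExtension.
Variables (X0 : Z) (e0 : Q -> ext_E X0).
Hypothesis e0_trivial : is_factor_set X0 e0 (fun _ _ => gone).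

Lemma zext_cocycle_cocycle X : cocycle2 (zext_cocycle X).
Proof. exact (factor_set_cocycle X0 e0 X _ _ e0_trivial (zext_cocycle_factor_set X)). Qed.

(* Normalize g by the constant g(1,1), realize the normalized cocycle by twisting
   X0, and undo the normalization with the coboundary of a constant. *)
Lemma zext_cocycle_surj g : cocycle2 g -> exists X, cohomologous g (zext_cocycle X).
Proof.
  intro Hg. set (k := g gone gone). set (g' := fun x y => gmul (g x y) (ginv k)).
  assert (Hg' : cocycle2 g') by exact (cocycle2_mulc A_abelian _ _ Hg).
  assert (Hg'1l : forall y, g' gone y = gone).
  { intro y. unfold g'. rewrite (cocycle2_1l _ y Hg). apply gmulVr. }
  assert (Hg'1r : forall x, g' x gone = gone).
  { intro x. unfold g'. rewrite (cocycle2_1r A_abelian _ x Hg). apply gmulVr. }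
  set (T := twist_zext X0 g' Hg' Hg'1l Hg'1r).
  exists T.
  destruct (factor_sets_cohomologous T _ _ e0 g' (zext_cocycle_factor_set T)
              (twist_factor_set X0 g' Hg' Hg'1l Hg'1r e0 e0_trivial)) as [h Hh].
  exists (fun q => gmul (h q) k). intros x y.
  rewrite coboundary1_mulc, gmulA, <- Hh by exact A_abelian. unfold g'. rewrite gmulKV.
  reflexivity.
Qed.

End BaseExtension.

End FactorSets.
End Cokernel.
End Extensions.

Theorem mainTheorem6
  (B D A : group) (d : B -> D) (theta : D -> B -> B) (zeta : B -> A)
  (Hcm : crossed_module d theta)
  (Hzeta : zeta_kernel d theta zeta)
  (Hsurj : zeta_surjective d zeta)
  (Q : group) (pi : D -> Q) (Hcoker : is_cokernel d pi)
  (Hex : exists X : zext d theta zeta, True) :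
  exists Phi : zext d theta zeta -> (Q -> Q -> A),
    (forall X, cocycle2 (Phi X)) /\
    (forall X Y, zext_equiv X Y <-> cohomologous (Phi X) (Phi Y)) /\
    (forall f : Q -> Q -> A, cocycle2 f -> exists X, cohomologous f (Phi X)).
Proof.
  destruct Hex as [X0 _].
  pose proof (proj1 Hzeta) as HA.
  destruct (choice _ (proj1 (proj2 Hcoker))) as [s Hs].
  destruct (exists_base_lift d theta zeta Hsurj pi Hcoker s Hs X0)
    as [bb [e0 [Hbb [He0 Hm0]]]].
  assert (H0 : is_factor_set d theta zeta s bb X0 e0 (fun _ _ => gone)).
  { split; [exact He0 |]. intros x y. rewrite ext_j1, gmul1r. apply Hm0. }
  exists (zext_cocycle d theta zeta s bb Hbb).
  split; [| split].
  - intro X. eapply zext_cocycle_cocycle; eassumption.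
  - intros X Y. eapply zext_equiv_cohomologous; eassumption.
  - intros f Hf. eapply zext_cocycle_surj; eassumption.
Qed.
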